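(* The function $$f(x,y)=\frac{(x+1)\log(x+y)}{(x+y)\big(\log(x+y)-\log y\big)},\qquad x>0,\ y\in\mathbb N_+,$$ is monotonically increasing in $y$ for every fixed $x>0$, and monotonically decreasing in $x$ for every fixed positive integer $y$.
   Context: $\log$ denotes the natural logarithm and $\mathbb N_+=\{1,2,3,\dots\}$. *)

From Stdlib Require Import Reals.
Open Scope R_scope.
Definition fxy (x y : R) : R :=
  (x + 1) * ln (x + y) / ((x + y) * (ln (x + y) - ln y)).

(* Write s = ln (x + y) - ln y = ln (1 + x/y), so that exp s = (x + y)/y.
   In y, the sign of the partial derivative of f is that of
   s - ln (x + y) (1 + s - exp s), nonnegative since exp s >= 1 + s.
   In x, it is that of ln (x + y) s (y - 1) - (x + 1) ln y; with a = ln y and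
   x + 1 = y (exp s - 1) + 1 this is (a + s) s (y - 1) - (y (exp s - 1) + 1) a,
   which is nonpositive by the cubic Taylor bound for exp and the Padé bound
   ln y >= 2 (y - 1)/(y + 1). *)

From Stdlib Require Import Reals Lra Psatz.
From Coquelicot Require Import Coquelicot.
Open Scope R_scope.

Lemma nondecreasing_of_derive_nonneg (f df : R -> R) (a b : R) :
  a <= b ->
  (forall x, a <= x <= b -> is_derive f x (df x)) ->
  (forall x, a <= x <= b -> 0 <= df x) ->
  f a <= f b.
Proof.
  intros hab hd hpos.
  destruct (MVT_gen f a b df) as [c [hc hmvt]];
    rewrite ?Rmin_left, ?Rmax_right in * by lra.
  - intros x hx; apply hd; lra.
  - intros x hx; apply continuity_pt_filterlim, (ex_derive_continuous f).
    exists (df x); apply hd; lra.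
  - assert (0 <= df c * (b - a)) by (apply Rmult_le_pos; [apply hpos | ]; lra).
    lra.
Qed.

Lemma exp_ge_taylor3 (s : R) : 0 <= s -> 1 + s + s ^ 2 / 2 + s ^ 3 / 6 <= exp s.
Proof.
  intros hs; pose proof (exp_ge_taylor s 3 hs) as h; simpl in h.
  unfold Rdiv in *; lra.
Qed.

Lemma ln_ge_2_mul_sub1_div_add1 (y : R) : 1 <= y -> 2 * (y - 1) / (y + 1) <= ln y.
Proof.
  intros hy.
  enough (0 - 2 * (1 - 1) / (1 + 1) <= ln y - 2 * (y - 1) / (y + 1)) by lra.
  rewrite <- ln_1 at 1.
  apply (nondecreasing_of_derive_nonneg (fun t => ln t - 2 * (t - 1) / (t + 1))
           (fun t => (t - 1) ^ 2 / (t * (t + 1) ^ 2))); [lra | |].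
  - intros t ht; auto_derive; [repeat split; lra | field; lra].
  - intros t ht; apply Rle_mult_inv_pos; [nra | apply Rmult_lt_0_compat; nra].
Qed.

Lemma ln_add_sub_ln_pos (x y : R) : 0 < x -> 0 < y -> 0 < ln (x + y) - ln y.
Proof. intros hx hy; pose proof (ln_increasing y (x + y) hy ltac:(lra)); lra. Qed.

Lemma exp_ln_add_sub_ln (x y : R) :
  0 < x -> 0 < y -> exp (ln (x + y) - ln y) = (x + y) / y.
Proof.
  intros hx hy; rewrite <- ln_div by lra.
  apply exp_ln, Rdiv_lt_0_compat; lra.
Qed.

Lemma ln_add_mul_le_exp_mul_ln (y s : R) : 1 <= y -> 0 <= s ->
  (ln y + s) * s * (y - 1) <= (y * (exp s - 1) + 1) * ln y.
Proof.
  intros hy hs.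
  set (a := ln y).
  set (P := 1 + s + y * s ^ 2 / 2 + y * s ^ 3 / 6).
  assert (hln : 2 * (y - 1) / (y + 1) <= a) by now apply ln_ge_2_mul_sub1_div_add1.
  assert (ha : 0 <= a).
  { enough (0 <= 2 * (y - 1) / (y + 1)) by lra.
    apply Rdiv_le_0_compat; lra. }
  assert (hexp : P + (y - 1) * s <= y * (exp s - 1) + 1).
  { pose proof (exp_ge_taylor3 s hs); unfold P; nra. }
  assert (hcubic : 0 <= 2 + 2 * s - s ^ 2 + s ^ 3 / 3).
  { assert (0 <= s * (s - 3 / 2) ^ 2) by (apply Rmult_le_pos; [lra | apply pow2_ge_0]).
    nra. }
  assert (h2P : (y + 1) * s ^ 2 <= 2 * P).
  { assert (0 <= (y - 1) * s ^ 3) by (apply Rmult_le_pos; [lra | apply pow_le; lra]).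
    unfold P; nra. }
  assert (hP : (y - 1) * s ^ 2 <= a * P).
  { assert (hbP : (y - 1) * s ^ 2 <= 2 * (y - 1) / (y + 1) * P).
    { replace (2 * (y - 1) / (y + 1) * P) with ((y - 1) / (y + 1) * (2 * P))
        by (field; lra).
      replace ((y - 1) * s ^ 2) with ((y - 1) / (y + 1) * ((y + 1) * s ^ 2))
        by (field; lra).
      apply Rmult_le_compat_l; [apply Rdiv_le_0_compat |]; lra. }
    assert (0 <= P).
    { assert (0 <= s ^ 3) by (apply pow_le; lra).
      unfold P; nra. }
    nra. }
  nra.
Qed.

Lemma is_derive_fxy_y (x y : R) : 0 < x -> 0 < y ->
  is_derive (fun t => fxy x t) y
    ((x + 1) * ((ln (x + y) - ln y)
                - ln (x + y) * ((ln (x + y) - ln y) + 1 - (x + y) / y))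
     / ((x + y) * (ln (x + y) - ln y)) ^ 2).
Proof.
  intros hx hy; pose proof (ln_add_sub_ln_pos x y hx hy); unfold fxy.
  auto_derive; [repeat split; try lra | field; repeat split; lra].
  apply Rgt_not_eq, Rmult_lt_0_compat; lra.
Qed.

Lemma is_derive_fxy_x (x y : R) : 0 < x -> 0 < y ->
  is_derive (fun t => fxy t y) x
    ((ln (x + y) * (ln (x + y) - ln y) * (y - 1) - (x + 1) * ln y)
     / ((x + y) * (ln (x + y) - ln y)) ^ 2).
Proof.
  intros hx hy; pose proof (ln_add_sub_ln_pos x y hx hy); unfold fxy.
  auto_derive; [repeat split; try lra | field; repeat split; lra].
  apply Rgt_not_eq, Rmult_lt_0_compat; lra.
Qed.

Lemma fxy_denominator_sqr_pos (x y : R) : 0 < x -> 0 < y ->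
  0 < ((x + y) * (ln (x + y) - ln y)) ^ 2.
Proof.
  intros hx hy; pose proof (ln_add_sub_ln_pos x y hx hy).
  apply pow2_gt_0, Rgt_not_eq, Rmult_lt_0_compat; lra.
Qed.

Lemma fxy_nondecreasing_in_y (x y1 y2 : R) :
  0 < x -> 1 <= y1 -> y1 <= y2 -> fxy x y1 <= fxy x y2.
Proof.
  intros hx hy1 hy12.
  eapply (nondecreasing_of_derive_nonneg (fun t => fxy x t) _ y1 y2 hy12).
  - intros y hy; apply is_derive_fxy_y; lra.
  - intros y hy.
    pose proof (ln_add_sub_ln_pos x y hx ltac:(lra)) as hs.
    pose proof (exp_ln_add_sub_ln x y hx ltac:(lra)) as hexp.
    pose proof (exp_ineq1_le (ln (x + y) - ln y)) as hexp_ge.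
    assert (hL : 0 <= ln (x + y)) by (rewrite <- ln_1; apply ln_le; lra).
    assert (0 <= ln (x + y) * ((x + y) / y - (ln (x + y) - ln y + 1)))
      by (apply Rmult_le_pos; lra).
    apply Rdiv_le_0_compat; [nra | apply fxy_denominator_sqr_pos; lra].
Qed.

Lemma fxy_nonincreasing_in_x (y x1 x2 : R) :
  1 <= y -> 0 < x1 -> x1 <= x2 -> fxy x2 y <= fxy x1 y.
Proof.
  intros hy hx1 hx12.
  enough (- fxy x1 y <= - fxy x2 y) by lra.
  eapply (nondecreasing_of_derive_nonneg (fun t => - fxy t y) _ x1 x2 hx12).
  - intros x hx; apply (is_derive_opp (fun t => fxy t y)), is_derive_fxy_x; lra.
  - intros x hx.
    pose proof (ln_add_sub_ln_pos x y ltac:(lra) ltac:(lra)) as hs.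
    pose proof (exp_ln_add_sub_ln x y ltac:(lra) ltac:(lra)) as hexp.
    pose proof (ln_add_mul_le_exp_mul_ln y (ln (x + y) - ln y) hy ltac:(lra)) as hineq.
    rewrite hexp in hineq.
    replace (y * ((x + y) / y - 1) + 1) with (x + 1) in hineq by (field; lra).
    replace (ln y + (ln (x + y) - ln y)) with (ln (x + y)) in hineq by ring.
    rewrite <- Ropp_0; apply Ropp_le_contravar.
    apply Rmult_le_0_r; [lra |].
    apply Rlt_le, Rinv_0_lt_compat, fxy_denominator_sqr_pos; lra.
Qed.

Theorem lemma5 :
  (forall (x : R) (m n : nat), 0 < x -> (1 <= m)%nat -> (m <= n)%nat ->
     fxy x (INR m) <= fxy x (INR n)) /\
  (forall (y : nat) (x1 x2 : R), (1 <= y)%nat -> 0 < x1 -> x1 <= x2 ->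
     fxy x2 (INR y) <= fxy x1 (INR y)).
Proof.
  split.
  - intros x m n hx hm hmn.
    apply fxy_nondecreasing_in_y; [exact hx | apply (le_INR 1) | apply le_INR];
      assumption.
  - intros y x1 x2 hy hx1 hx12.
    apply fxy_nonincreasing_in_x; [apply (le_INR 1) | |]; assumption.
Qed.
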